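(* Let $(\mathcal V,\mathcal W,\lambda)$ be a FTvN system and $x,y\in\mathcal V$. Then: (a) $x\prec y$ implies $\langle c,x\rangle\le\langle\lambda(c),\lambda(y)\rangle$ for all $c\in\mathcal V$; the reverse implication holds if $\mathcal V$ is finite dimensional. (b) $x\prec y$ implies $\langle\lambda(c),\lambda(x)\rangle\le\langle\lambda(c),\lambda(y)\rangle$ for all $c\in\mathcal V$; the reverse implication holds if $\mathcal V$ is finite dimensional. (c) $x\prec y$ and $y\prec x$ if and only if $[x]=[y]$.
   Context: A Fan-Theobald-von Neumann (FTvN) system is a triple $(\mathcal V,\mathcal W,\lambda)$ where $\mathcal V,\mathcal W$ are real inner product spaces and $\lambda:\mathcal V\to\mathcal W$ is a map such that: (A1) $\|\lambda(x)\|=\|x\|$ for all $x$; (A2) $\langle x,y\rangle\le\langle\lambda(x),\lambda(y)\rangle$ for all $x,y$; (A3) for every $c\in\mathcal V$ and $q\in\lambda(\mathcal V)$ there exists $x$ with $\lambda(x)=q$ and $\langle c,x\rangle=\langle\lambda(c),\lambda(x)\rangle$. The $\lambda$-orbit of $u$ is $[u]=\{z\in\mathcal V:\lambda(z)=\lambda(u)\}$. Majorization: $x\prec y$ means $x\in\operatorname{conv}[y]$ (convex hull, not closure). *)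

From HB Require Import structures.
From mathcomp Require Import all_boot all_order all_algebra.
From mathcomp Require Import reals.
Set Implicit Arguments. Unset Strict Implicit. Unset Printing Implicit Defensive.
Import Order.TTheory GRing.Theory Num.Theory.
Local Open Scope ring_scope.

Record inner_product (R : realType) (V : lmodType R) := InnerProduct {
  ip : V -> V -> R;
  ip_sym : forall x y, ip x y = ip y x;
  ip_linear : forall (a : R) (x y z : V), ip (a *: x + y) z = a * ip x z + ip y z;
  ip_pos : forall x, x != 0 -> 0 < ip x x
}.

Definition ipnorm (R : realType) (V : lmodType R) (I : inner_product V) (x : V) : R :=
  Num.sqrt (ip I x x).

Definition FTvN (R : realType) (V W : lmodType R)
  (IV : inner_product V) (IW : inner_product W) (lam : V -> W) : Prop :=
  [/\ (forall x, ipnorm IW (lam x) = ipnorm IV x),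
      (forall x y, ip IV x y <= ip IW (lam x) (lam y)) &
      (forall (c : V) (q : W), (exists u, lam u = q) ->
         exists x, lam x = q /\ ip IV c x = ip IW (lam c) (lam x))].

Definition lorbit (R : realType) (V W : lmodType R) (lam : V -> W) (u : V) : V -> Prop :=
  fun z => lam z = lam u.

(* convex hull (finite convex combinations; no closure) *)
Definition conv_hull (R : realType) (V : lmodType R) (S : V -> Prop) : V -> Prop :=
  fun x => exists (n : nat) (a : 'I_n -> R) (z : 'I_n -> V),
    [/\ (forall i, 0 <= a i), \sum_(i < n) a i = 1, (forall i, S (z i)) &
        x = \sum_(i < n) a i *: z i].

Definition majorized (R : realType) (V W : lmodType R) (lam : V -> W) (x y : V) : Prop :=
  conv_hull (lorbit lam y) x.

Definition finite_dim (R : realType) (V : lmodType R) : Prop :=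
  exists (n : nat) (b : 'I_n -> V), forall v : V,
    exists a : 'I_n -> R, v = \sum_(i < n) a i *: b i.

From mathcomp Require Import all_boot all_order all_algebra.
From mathcomp Require Import reals.
From mathcomp Require Import all_classical all_reals all_analysis.
From mathcomp Require Import ring lra.
Set Implicit Arguments. Unset Strict Implicit. Unset Printing Implicit Defensive.
Import Order.TTheory GRing.Theory Num.Theory numFieldNormedType.Exports.
Local Open Scope ring_scope.

(* Forward directions: by (A2), each point [z] of the orbit [y] satisfies
   [<c, z> <= <lam c, lam y>], and this inequality survives convex combinations;
   (A3) rewrites [<lam c, lam x>] as [<u, x>] for some [u] with [lam u = lam c],
   and (c) then follows from (b) with [c = x] and [c = y].
   Converse of (a) in finite dimension: in an orthonormal basis the orbit [y]
   becomes a compact set [K] of [R^d] (bounded by (A1), closed since [lam] is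
   1-Lipschitz), and by Carathéodory its convex hull is the continuous image of a
   compact set of weighted [d + 2]-tuples, so a nearest point [P] to [x] exists
   and [<x - P, z - P> <= 0] for all [z] in [K]. By (A3) some [z] in [y] has
   [<x - P, z> = <lam (x - P), lam y> >= <x - P, x>], whence [x = P]. The
   converse of (b) reduces to that of (a) through (A2). *)

Section InnerProduct.
Variables (R : realType) (V : lmodType R) (I : inner_product V).
Local Notation ip := (ip I).

Lemma ipDl x y z : ip (x + y) z = ip x z + ip y z.
Proof. by have := ip_linear I 1 x y z; rewrite scale1r mul1r. Qed.

Lemma ip0l z : ip 0 z = 0.
Proof. by apply/(addrI (ip 0 z)); rewrite -ipDl !addr0. Qed.

Lemma ipZl a x z : ip (a *: x) z = a * ip x z.
Proof. by have := ip_linear I a x 0 z; rewrite addr0 ip0l addr0. Qed.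

Lemma ipNl x z : ip (- x) z = - ip x z.
Proof. by rewrite -scaleN1r ipZl mulN1r. Qed.

Lemma ipBl x y z : ip (x - y) z = ip x z - ip y z.
Proof. by rewrite ipDl ipNl. Qed.

Lemma ip_suml n (F : 'I_n -> V) z : ip (\sum_i F i) z = \sum_i ip (F i) z.
Proof. by elim/big_rec2: _ => [|i a b _ <-]; rewrite ?ip0l ?ipDl. Qed.

Lemma ipZr a x z : ip z (a *: x) = a * ip z x.
Proof. by rewrite ip_sym ipZl ip_sym. Qed.

Lemma ipBr x y z : ip z (x - y) = ip z x - ip z y.
Proof. by rewrite ip_sym ipBl !(ip_sym I z). Qed.

Lemma ip_sumr n (F : 'I_n -> V) z : ip z (\sum_i F i) = \sum_i ip z (F i).
Proof. by rewrite ip_sym ip_suml; apply: eq_bigr => i _; rewrite ip_sym. Qed.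

Lemma ipxx_ge0 x : 0 <= ip x x.
Proof. by have [->|/(ip_pos I)/ltW] := eqVneq x 0; rewrite ?ip0l. Qed.

Lemma ipxx_le0 x : (ip x x <= 0) = (x == 0).
Proof.
have [->|/(ip_pos I) x_gt0] := eqVneq x 0; first by rewrite ip0l lexx.
by rewrite leNgt x_gt0.
Qed.

Lemma ipxx_subZ x u t :
  ip (x - t *: u) (x - t *: u) = ip x x - 2 * t * ip x u + t ^+ 2 * ip u u.
Proof. rewrite !ipBl !ipBr !ipZl !ipZr (ip_sym I u x); ring. Qed.

(* With [s := ip (x - p) (u - p)] and [q := ip (u - p) (u - p)], moving from
   [p] towards [u] by [t] changes the squared distance to [x] by
   [t (t q - 2 s)], which is negative for [t = s / (s + q)] when [s > 0]. *)
Lemma nearest_point_obtuse (C : set V) x p u :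
  (forall t, 0 < t <= 1 -> C (p + t *: (u - p))) ->
  (forall q, C q -> ip (x - p) (x - p) <= ip (x - q) (x - q)) ->
  ip (x - p) (u - p) <= 0.
Proof.
move=> Cseg pmin; set s := ip (x - p) (u - p); set q := ip (u - p) (u - p).
rewrite leNgt; apply/negP => s_gt0.
have q_ge0 : 0 <= q := ipxx_ge0 (u - p).
pose t := s / (s + q).
have t_gt0 : 0 < t by rewrite divr_gt0 // ltr_wpDr.
have t_le1 : t <= 1 by rewrite ler_pdivrMr ?ltr_wpDr // mul1r lerDl.
have t01 : 0 < t <= 1 by rewrite t_gt0 t_le1.
have := pmin _ (Cseg t t01).
rewrite opprD addrA ipxx_subZ -/s -/q => h.
have tq_le : t * q <= s by rewrite /t mulrAC ler_pdivrMr ?ltr_wpDr //; nra.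
nra.
Qed.

End InnerProduct.

Section Orthonormal.
Variables (R : realType) (V : lmodType R) (I : inner_product V).
Local Notation ip := (ip I).

Definition orthonormal d (e : 'I_d -> V) :=
  forall i j, ip (e i) (e j) = (i == j)%:R.

Definition fourier d (e : 'I_d -> V) v := \sum_(i < d) ip v (e i) *: e i.

Definition extend d (e : 'I_d -> V) f : 'I_d.+1 -> V :=
  fun i => if unlift ord_max i is Some k then e k else f.

Lemma ip_fourier d (e : 'I_d -> V) v j :
  orthonormal e -> ip (fourier e v) (e j) = ip v (e j).
Proof.
move=> e_on; rewrite ip_suml (bigD1 j) //= ipZl e_on eqxx mulr1 big1 ?addr0 //.
by move=> i /negbTE ij; rewrite ipZl e_on ij mulr0.
Qed.

Lemma fourier_orth d (e : 'I_d -> V) v w :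
  (forall k, ip (e k) w = 0) -> ip (fourier e v) w = 0.
Proof. by move=> ew; rewrite ip_suml big1 // => i _; rewrite ipZl ew mulr0. Qed.

Lemma fourierD d (e : 'I_d -> V) a u v :
  fourier e (a *: u + v) = a *: fourier e u + fourier e v.
Proof.
rewrite /fourier scaler_sumr -big_split; apply: eq_bigr => i _ /=.
by rewrite ip_linear scalerDl scalerA.
Qed.

Lemma orthonormal_extend d (e : 'I_d -> V) f :
  orthonormal e -> ip f f = 1 -> (forall k, ip (e k) f = 0) ->
  orthonormal (extend e f).
Proof.
move=> e_on f1 ef i j; rewrite /extend.
case: unliftP => [i'|] ->; case: unliftP => [j'|] ->.
- by rewrite e_on (inj_eq lift_inj).
- by rewrite ef eq_sym (negbTE (neq_lift _ _)).
- by rewrite ip_sym ef (negbTE (neq_lift _ _)).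
- by rewrite f1 eqxx.
Qed.

Lemma fourier_extend d (e : 'I_d -> V) f v :
  fourier (extend e f) v = fourier e v + ip v f *: f.
Proof.
rewrite /fourier big_ord_recr /= /extend unlift_none; congr (_ + _).
apply: eq_bigr => i _; have -> : widen_ord (leqnSn d) i = lift ord_max i.
  by apply: val_inj; rewrite /= /bump leqNgt ltn_ord.
by rewrite liftK.
Qed.

(* Gram-Schmidt step: normalise the residual [b - fourier e b] and append it. *)
Lemma gram_schmidt_step d (e : 'I_d -> V) b : orthonormal e ->
  exists d' (e' : 'I_d' -> V), [/\ orthonormal e',
    forall v, fourier e v = v -> fourier e' v = v & fourier e' b = b].
Proof.
move=> e_on; set r := b - fourier e b.
have er k : ip (e k) r = 0 by rewrite ip_sym ipBl ip_fourier // subrr.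
have [r0|r_neq0] := eqVneq r 0.
  by exists d, e; split => //; apply/esym/eqP; rewrite -subr_eq0 -/r r0.
have rr_gt0 : 0 < ip r r := ip_pos I r_neq0.
set s := Num.sqrt (ip r r); have s_gt0 : 0 < s by rewrite sqrtr_gt0.
have s2 : s ^+ 2 = ip r r by rewrite sqr_sqrtr ?ltW.
set f := s^-1 *: r.
have f1 : ip f f = 1 by rewrite ipZl ipZr mulrA -expr2 exprVn s2 mulVf ?gt_eqF.
have ef k : ip (e k) f = 0 by rewrite ipZr er mulr0.
exists d.+1, (extend e f); split; first exact: orthonormal_extend.
  move=> v ev; rewrite fourier_extend ev -[in ip v f]ev fourier_orth //.
  by rewrite scale0r addr0.
have brf : ip b f = s.
  rewrite -[in ip b f](subrK (fourier e b) b) -/r ipDl.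
  by rewrite fourier_orth // addr0 ipZr -s2 expr2 mulKf ?gt_eqF.
rewrite fourier_extend brf /f scalerA mulfV ?gt_eqF // scale1r.
by rewrite /r addrC subrK.
Qed.

Lemma gram_schmidt n (b : 'I_n -> V) :
  exists d (e : 'I_d -> V), orthonormal e /\ forall j, fourier e (b j) = b j.
Proof.
elim: n b => [|n IHn] b; first by exists 0%N, (fun=> 0); split => -[].
have [d [e [e_on eb]]] := IHn (fun j => b (lift ord_max j)).
have [d' [e' [e'_on ee' e'b]]] := gram_schmidt_step (b ord_max) e_on.
exists d', e'; split => // j.
by case: (unliftP ord_max j) => [j'|] ->; first exact/ee'/eb.
Qed.

Lemma finite_dim_orthonormal_basis : finite_dim V ->
  exists d (e : 'I_d -> V), orthonormal e /\ forall v, fourier e v = v.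
Proof.
move=> [n [b spanb]]; have [d [e [e_on eb]]] := gram_schmidt b.
exists d, e; split => // v; have [a ->] := spanb v.
elim/big_rec: _ => [|i w _ ew]; last by rewrite fourierD eb ew.
by rewrite /fourier big1 // => i _; rewrite ip0l scale0r.
Qed.

End Orthonormal.

Lemma caratheodory_free_slot (R : realType) d (a : 'I_d.+2 -> R)
    (z : 'I_d.+2 -> 'rV[R]_d) :
  (forall i, 0 <= a i) -> \sum_i a i = 1 ->
  exists i0 (b : 'I_d.+2 -> R), [/\ forall i, 0 <= b i, \sum_i b i = 1,
    b i0 = 0 & \sum_i b i *: z i = \sum_i a i *: z i].
Proof.
move=> a_ge0 a1.
pose M : 'M[R]_(d.+2, 1 + d) := row_mx (const_mx 1) (\matrix_i z i).
have : kermx M != 0.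
  rewrite kermx_eq0 /row_free; apply/negP => /eqP rkM.
  by have := rank_leq_col M; rewrite rkM add1n ltnn.
case/rowV0Pn => u /sub_kermxP; rewrite mul_mx_row => /eqP.
rewrite row_mx_eq0 => /andP[/eqP u1 /eqP uz] u_neq0.
have u_sum : \sum_i u 0 i = 0.
  have /matrixP/(_ 0 0) := u1; rewrite !mxE => u1E; rewrite -[RHS]u1E.
  by under [RHS]eq_bigr do rewrite mxE mulr1.
have u_comb : \sum_i u 0 i *: z i = 0.
  by rewrite -[RHS]uz mulmx_sum_row; apply: eq_bigr => i _; rewrite rowK.
have [i1 u_i1] : exists i, 0 < u 0 i.
  apply/not_existsP => u_le0; move/negP: u_neq0; apply; apply/eqP/rowP => i.
  have Nu_ge0 j : 0 <= - u 0 j by rewrite oppr_ge0 leNgt; apply/negP/u_le0.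
  have /psumr_eq0P/(_ i isT) : \sum_j - u 0 j = 0 by rewrite sumrN u_sum oppr0.
  by rewrite mxE => /(_ (fun j _ => Nu_ge0 j))/eqP; rewrite oppr_eq0 => /eqP.
have [i0 u_i0 min_i0] := @arg_minP _ R _ i1 (fun i => 0 < u 0 i)
  (fun i => a i / u 0 i) u_i1.
set t := a i0 / u 0 i0; have t_ge0 : 0 <= t by rewrite divr_ge0 // ltW.
exists i0, (fun i => a i - t * u 0 i); split.
- move=> i; rewrite subr_ge0; have [u_i|u_i] := ltP 0 (u 0 i).
    by rewrite -ler_pdivlMr //; apply: min_i0.
  by apply: le_trans (a_ge0 i); rewrite mulr_ge0_le0.
- by rewrite sumrB -mulr_sumr u_sum mulr0 subr0.
- by rewrite /t divfK ?subrr // gt_eqF.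
- under eq_bigr do rewrite scalerBl -scalerA.
  by rewrite sumrB -scaler_sumr u_comb scaler0 subr0.
Qed.

Section EuclideanRows.
Variables (R : realType) (d : nat).
Implicit Types u v w : 'rV[R]_d.

Definition dotmx u v := \sum_j u 0 j * v 0 j.

Lemma dotmx_sym u v : dotmx u v = dotmx v u.
Proof. by apply: eq_bigr => j _; rewrite mulrC. Qed.

Lemma dotmx_linear a u v w : dotmx (a *: u + v) w = a * dotmx u w + dotmx v w.
Proof.
rewrite /dotmx mulr_sumr -big_split; apply: eq_bigr => j _ /=.
by rewrite !mxE mulrDl mulrA.
Qed.

Lemma dotmx_pos u : u != 0 -> 0 < dotmx u u.
Proof.
move=> u_neq0; have [j uj] : exists j, u 0 j != 0.
  apply/not_existsP => u0; move/eqP: u_neq0; apply; apply/rowP => j.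
  by rewrite mxE; apply/eqP/negPn/negP/u0.
rewrite /dotmx (bigD1 j) //= ltr_pwDl //.
  by rewrite lt0r mulf_neq0 //= -expr2 sqr_ge0.
by apply: sumr_ge0 => i _; rewrite -expr2 sqr_ge0.
Qed.

Definition dotmx_ip := InnerProduct dotmx_sym dotmx_linear dotmx_pos.
Local Notation dot := (ip dotmx_ip).

Lemma dotmx_continuous : continuous (fun u => dot u u).
Proof.
apply: (@continuous_big _ _ +%R 0 xpredT add_continuous) => j _ u.
by apply: continuousM; apply: coord_continuous.
Qed.

Lemma entry_sqr_le_dotmx u j : u 0 j ^+ 2 <= dot u u.
Proof.
rewrite /= /dotmx (bigD1 j) //= -expr2 lerDl.
by apply: sumr_ge0 => i _; rewrite -expr2 sqr_ge0.
Qed.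

Lemma dotmx_bounded (K : set 'rV[R]_d) B :
  (forall u, K u -> dot u u <= B) -> bounded_set K.
Proof.
move=> KB; exists (1 + B); split; first by rewrite num_real.
move=> M BM u Ku /=; have -> : `|u| = mx_norm u by [].
rewrite mx_normrE; apply: bigmax_le => [|[i j] _ /=].
  by have := ipxx_ge0 dotmx_ip u; have := KB _ Ku; lra.
rewrite (ord1 i); apply: le_trans (ltW BM).
have := entry_sqr_le_dotmx u j; have := KB _ Ku.
rewrite -real_normK ?num_real //; have := normr_ge0 (u 0 j); nra.
Qed.

Lemma dotmx_le_entries u e :
  (forall j, `|u 0 j| <= e) -> dot u u <= d%:R * e ^+ 2.
Proof.
move=> ue; rewrite mulr_natl -[d in _ *+ d]card_ord -sumr_const.
apply: ler_sum => j _.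
rewrite -expr2 -real_normK ?num_real // lerXn2r ?nnegrE //.
by apply: le_trans (ue j).
Qed.

End EuclideanRows.

Section HullOfCompact.
Variables (R : realType) (d : nat).
Local Notation dot := (ip (dotmx_ip R d)).
(* [d + 2] rather than [d + 1] weighted points, so that Carathéodory always
   frees a slot. *)
Local Notation param := {ptws 'I_d.+2 -> (R * 'rV[R]_d)%type}.
Local Open Scope classical_set_scope.

Definition comb (p : param) := \sum_i (p i).1 *: (p i).2.

Definition combos (K : set 'rV[R]_d) : set param :=
  [set p | forall i, (`[0, 1] `*` K) (p i)] `&` [set p | \sum_i (p i).1 = 1].

Lemma comb_continuous : continuous comb.
Proof.
apply: (@continuous_big _ _ +%R 0 xpredT add_continuous) => i _ p.
apply: (@continuousZ R _ param).
  by apply: (continuous_comp (@proj_continuous _ _ i p)); apply: cvg_fst.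
by apply: (continuous_comp (@proj_continuous _ _ i p)); apply: cvg_snd.
Qed.

Lemma combos_compact K : compact K -> compact (combos K).
Proof.
move=> K_compact; apply: compact_closedI.
  apply: (@tychonoff _ (fun=> (R * 'rV[R]_d)%type) (fun=> `[0, 1] `*` K)) => i.
  exact: compact_setX (@segment_compact _ _ _) K_compact.
pose weight_sum (p : param) := \sum_i (p i).1.
suff /continuous_closedP/(_ _ (@closed_eq _ 1)) : continuous weight_sum by [].
apply: (@continuous_big _ _ +%R 0 xpredT add_continuous) => i _ p.
by apply: (continuous_comp (@proj_continuous _ _ i p)); apply: cvg_fst.
Qed.

Lemma combosP K p : combos K p ->
  [/\ forall i, 0 <= (p i).1, \sum_i (p i).1 = 1 & forall i, K (p i).2].
Proof.
move=> [p_box p1]; split=> // i; last by have [] := p_box i.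
by have [+ _] := p_box i; rewrite /= in_itv /= => /andP[].
Qed.

Lemma weight_le1 n (b : 'I_n -> R) i :
  (forall j, 0 <= b j) -> \sum_j b j = 1 -> b i <= 1.
Proof. by move=> b_ge0 <-; rewrite (bigD1 i) //= lerDl sumr_ge0. Qed.

(* The free slot given by Carathéodory receives the new point [u]. *)
Lemma combos_segment K p u t : combos K p -> K u -> 0 <= t <= 1 ->
  exists2 q, combos K q & comb q = comb p + t *: (u - comb p).
Proof.
move=> /combosP[p_ge0 p1 pK] Ku /andP[t_ge0 t_le1].
have [i0 [b [b_ge0 b1 bi0 bE]]] :=
  caratheodory_free_slot (fun i => (p i).2) p_ge0 p1.
pose q : param := fun i =>
  ((1 - t) * b i + (i == i0)%:R * t, if i == i0 then u else (p i).2).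
have q_ge0 i : 0 <= (q i).1.
  by rewrite addr_ge0 ?mulr_ge0 ?subr_ge0.
have q1 : \sum_i (q i).1 = 1.
  rewrite big_split /= -mulr_sumr b1 -big_distrl /= (bigD1 i0) //= eqxx.
  by rewrite big1 ?addr0 ?mul1r ?mulr1 ?subrK // => i /negbTE ->.
exists q.
  split => [i|//]; split => /=; last by case: eqP.
  by rewrite in_itv /= q_ge0 (weight_le1 _ q_ge0 q1).
have -> : forall P : 'rV[R]_d, P + t *: (u - P) = (1 - t) *: P + t *: u.
  by move=> P; rewrite scalerBl scale1r scalerBr addrCA addrC.
rewrite /comb -bE; under eq_bigr do rewrite scalerDl.
rewrite big_split /= scaler_sumr; congr (_ + _).
  apply: eq_bigr => i _; rewrite scalerA.
  by case: eqP => [->|//]; rewrite bi0 !mulr0 !scale0r.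
rewrite (bigD1 i0) //= eqxx mul1r big1 ?addr0 // => i /negbTE ->.
by rewrite mul0r scale0r.
Qed.

(* The convex hull of a compact subset of [R^d] is closed, hence cut out by
   its support function. *)
Lemma conv_hull_support K x : compact K ->
  (forall c, exists2 z, K z & dot c x <= dot c z) -> conv_hull K x.
Proof.
move=> K_compact supp; have [z0 Kz0 _] := supp 0.
have S0 : combos K !=set0.
  exists (fun i => ((i == ord0)%:R, z0)); split => [i|]; last first.
    by rewrite /= (bigD1 ord0) //= big1 ?addr0 ?eqxx // => i /negbTE ->.
  by split => //=; rewrite in_itv /= ler0n lern1 leq_b1.
pose G p := dot (x - comb p) (x - comb p).
have G_cont : continuous G.
  move=> p.
  apply: (@continuous_comp _ _ _ (fun p => x - comb p) (fun v => dot v v)).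
    by apply: (@continuousB _ _ _ (cst x) comb p);
      [exact: cst_continuous | exact: comb_continuous].
  exact: dotmx_continuous.
have [p /set_mem pS pmin] :=
  compact_EVT_min S0 (combos_compact K_compact) (continuous_subspaceT G_cont).
set P := comb p.
have obtuse u : K u -> dot (x - P) (u - P) <= 0.
  move=> Ku; apply: (nearest_point_obtuse (C := comb @` combos K)).
    move=> t /andP[/ltW t_ge0 t_le1].
    have [q qS <-] := combos_segment pS Ku (introT andP (conj t_ge0 t_le1)).
    by exists q.
  by move=> _ [q qS <-]; apply: pmin; apply: mem_set.
have [z Kz xz] := supp (x - P).
have /eqP xP : x - P == 0.
  rewrite -(ipxx_le0 (dotmx_ip R d)); apply: le_trans (obtuse _ Kz).
  by rewrite [X in X <= _]ipBr ipBr lerD2r.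
move/eqP: xP; rewrite subr_eq0 => /eqP ->; case/combosP: pS => p_ge0 p1 pK.
by exists d.+2, (fun i => (p i).1), (fun i => (p i).2).
Qed.

End HullOfCompact.

Section Coordinates.
Variables (R : realType) (V : lmodType R) (I : inner_product V).
Variables (d : nat) (e : 'I_d -> V).
Hypotheses (e_on : orthonormal I e) (e_basis : forall v, fourier I e v = v).
Local Notation dot := (ip (dotmx_ip R d)).

Definition coord v : 'rV[R]_d := \row_j ip I v (e j).

Definition vec_of (u : 'rV[R]_d) := \sum_j u 0 j *: e j.

Lemma coordK : cancel coord vec_of.
Proof.
by move=> v; rewrite -[RHS]e_basis; apply: eq_bigr => j _; rewrite mxE.
Qed.

Lemma vec_ofK : cancel vec_of coord.
Proof.
move=> u; apply/rowP => j; rewrite mxE ip_suml (bigD1 j) //= ipZl e_on eqxx.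
by rewrite mulr1 big1 ?addr0 // => i /negbTE ij; rewrite ipZl e_on ij mulr0.
Qed.

Lemma ip_vec_of c v : ip I (vec_of c) v = dot c (coord v).
Proof.
by rewrite ip_suml; apply: eq_bigr => j _; rewrite ipZl mxE ip_sym.
Qed.

Lemma vec_ofB u w : vec_of (u - w) = vec_of u - vec_of w.
Proof. by rewrite -sumrB; apply: eq_bigr => j _; rewrite !mxE scalerBl. Qed.

Lemma vec_of_comb n (a : 'I_n -> R) (z : 'I_n -> 'rV[R]_d) :
  vec_of (\sum_i a i *: z i) = \sum_i a i *: vec_of (z i).
Proof.
rewrite /vec_of; under eq_bigr do rewrite summxE scaler_suml.
rewrite exchange_big /=; apply: eq_bigr => i _; rewrite scaler_sumr.
by apply: eq_bigr => j _; rewrite mxE scalerA.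
Qed.

End Coordinates.

Lemma lipschitz_fibre_closed (R : realType) d (W : lmodType R)
    (IW : inner_product W) (f : 'rV[R]_d -> W) w :
  (forall u v,
     ip IW (f u - f v) (f u - f v) <= ip (dotmx_ip R d) (u - v) (u - v)) ->
  closed [set u | f u = w].
Proof.
move=> f_lip u u_cl; apply/eqP; rewrite -subr_eq0 -(ipxx_le0 IW).
set r := ip IW _ _; rewrite leNgt; apply/negP => r_gt0.
set eps := Num.sqrt (r / d.+1%:R).
have eps_gt0 : 0 < eps by rewrite sqrtr_gt0 divr_gt0.
have [q [fq uq]] := u_cl _ (nbhsx_ballx u eps eps_gt0).
have r_le : r <= d%:R * eps ^+ 2.
  rewrite /r -[X in f u - X]fq; apply: le_trans (f_lip _ _) _.
  by apply: dotmx_le_entries => j; rewrite !mxE; case: uq => _ /(_ 0 j) /ltW.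
suff : d%:R * eps ^+ 2 < r by rewrite ltNge r_le.
rewrite sqr_sqrtr; last by rewrite divr_ge0 // ltW.
by rewrite mulrA ltr_pdivrMr ?ltr0Sn // mulrC ltr_pM2l // ltr_nat.
Qed.

Lemma conv_hull_self (R : realType) (V : lmodType R) (S : set V) x :
  S x -> conv_hull S x.
Proof.
by move=> Sx; exists 1%N, (fun=> 1), (fun=> x); rewrite !big_ord1 scale1r.
Qed.

Lemma conv_hull_map (R : realType) (U V : lmodType R) (f : U -> V)
    (S : set U) (T : set V) x :
  (forall n (a : 'I_n -> R) z, f (\sum_i a i *: z i) = \sum_i a i *: f (z i)) ->
  (forall u, S u -> T (f u)) -> conv_hull S x -> conv_hull T (f x).
Proof.
move=> f_comb ST [n [a [z [a_ge0 a1 Sz ->]]]].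
by exists n, a, (f \o z); split => // i; apply: ST.
Qed.

Section FTvN.
Variables (R : realType) (V W : lmodType R).
Variables (IV : inner_product V) (IW : inner_product W) (lam : V -> W).
Hypothesis sys : FTvN IV IW lam.

Lemma lam_ipxx a : ip IW (lam a) (lam a) = ip IV a a.
Proof.
case: sys => lam_norm _ _; have := congr1 (fun r => r ^+ 2) (lam_norm a).
by rewrite /ipnorm /= !sqr_sqrtr ?ipxx_ge0.
Qed.

Lemma lam_dist_le a b :
  ip IW (lam a - lam b) (lam a - lam b) <= ip IV (a - b) (a - b).
Proof.
case: sys => _ lam_ip _.
rewrite !ipBl !ipBr !lam_ipxx (ip_sym IW (lam b)) (ip_sym IV b).
by have := lam_ip a b; lra.
Qed.

Lemma majorized_ip_le x y :
  majorized lam x y -> forall c, ip IV c x <= ip IW (lam c) (lam y).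
Proof.
case: sys => _ lam_ip _ [n [a [z [a_ge0 a1 zy ->]]]] c.
rewrite ip_sumr -[ip IW _ _]mul1r -a1 mulr_suml.
by apply: ler_sum => i _; rewrite ipZr -(zy i) ler_wpM2l.
Qed.

Lemma majorized_lam_ip_le x y :
  majorized lam x y -> forall c, ip IW (lam c) (lam x) <= ip IW (lam c) (lam y).
Proof.
move=> xy c; case: sys => _ _ lam_attain.
have [u [uc xu]] := lam_attain x (lam c) (ex_intro _ c erefl).
by rewrite -uc ip_sym -xu ip_sym; apply: majorized_ip_le.
Qed.

Lemma orbit_coords_compact d (e : 'I_d -> V) y :
  orthonormal IV e -> compact [set u | lam (vec_of e u) = lam y].
Proof.
move=> e_on; apply: bounded_closed_compact.
  apply: (@dotmx_bounded _ _ _ (ip IV y y)) => u lu.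
  have -> : ip (dotmx_ip R d) u u = ip IV (vec_of e u) (vec_of e u).
    by rewrite ip_vec_of vec_ofK.
  by rewrite -lam_ipxx lu lam_ipxx.
apply: lipschitz_fibre_closed => u v; apply: le_trans (lam_dist_le _ _) _.
by rewrite -vec_ofB ip_vec_of vec_ofK.
Qed.

Lemma ip_le_majorized x y : finite_dim V ->
  (forall c, ip IV c x <= ip IW (lam c) (lam y)) -> majorized lam x y.
Proof.
move=> /(@finite_dim_orthonormal_basis _ _ IV)[d [e [e_on e_basis]]] le_xy.
rewrite /majorized -(coordK e_basis x).
apply: (conv_hull_map (vec_of_comb e) (S := [set u | lam (vec_of e u) = lam y])).
  by [].
apply: conv_hull_support (orbit_coords_compact (y := y) e_on) _ => c.
case: sys => _ _ lam_attain.
have [w [lw cw]] := lam_attain (vec_of e c) (lam y) (ex_intro _ y erefl).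
exists (coord IV e w); first by rewrite /= coordK.
by rewrite -!ip_vec_of cw lw.
Qed.

Lemma majorized_antisymE x y :
  majorized lam x y /\ majorized lam y x <-> lorbit lam x = lorbit lam y.
Proof.
split => [[xy yx]|orbit_xy].
  have := majorized_lam_ip_le xy x; have := majorized_lam_ip_le yx y.
  rewrite (ip_sym IW (lam y) (lam x)) => yx_le xy_le.
  suff : lam x - lam y == 0 by rewrite subr_eq0 /lorbit => /eqP ->.
  by rewrite -(ipxx_le0 IW) !ipBl !ipBr (ip_sym IW (lam y) (lam x)); lra.
have lxy : lam x = lam y by have : lorbit lam x x by []; rewrite orbit_xy.
by split; apply: conv_hull_self; rewrite /lorbit lxy.
Qed.

End FTvN.

Theorem proposition8p3 (R : realType) (V W : lmodType R)
  (IV : inner_product V) (IW : inner_product W) (lam : V -> W)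
  (Hsys : FTvN IV IW lam) (x y : V) :
  [/\ (majorized lam x y ->
        forall c : V, ip IV c x <= ip IW (lam c) (lam y))
      /\ (finite_dim V ->
        (forall c : V, ip IV c x <= ip IW (lam c) (lam y)) -> majorized lam x y),
      (majorized lam x y ->
        forall c : V, ip IW (lam c) (lam x) <= ip IW (lam c) (lam y))
      /\ (finite_dim V ->
        (forall c : V, ip IW (lam c) (lam x) <= ip IW (lam c) (lam y)) ->
        majorized lam x y) &
      (majorized lam x y /\ majorized lam y x <-> lorbit lam x = lorbit lam y)].
Proof.
split.
- split=> [xy|fdim]; first exact: (majorized_ip_le Hsys xy).
  exact: (ip_le_majorized Hsys fdim).
- split=> [xy|fdim le_xy]; first exact: (majorized_lam_ip_le Hsys xy).
  apply: (ip_le_majorized Hsys fdim) => c.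
  by case: Hsys => _ lam_ip _; apply: le_trans (lam_ip c x) (le_xy c).
- exact: (majorized_antisymE Hsys x y).
Qed.
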